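(* Let $n\ge1$ and let $\mathcal C$ be an EACP over $\mathbb R$ with natural basis $\{h_1,\dots,h_n,r\}$ and structural constants $a_{ij},b_i\in\mathbb R$; identify $\sum_i x_ih_i+ur$ with $(x_1,\dots,x_n,u)$. For $u\in\mathbb R$ let $T_u=(t_{ij})_{i,j=1}^n$ with $t_{ij}=ua_{ji}$ for $i\neq j$ and $t_{ii}=ua_{ii}-1$, and let ${\bf b}(x)=\sum_{i=1}^n b_ix_i$ for $x=(x_1,\dots,x_n)$. Then the set of idempotent elements $\{y\in\mathcal C: y^2=y\}$ equals $$\{0\}\cup\{(x_1^*,\dots,x_n^*,u_* ): u_*\neq0,\ \det(T_{u_*})=0,\ T_{u_*}x^*=0,\ {\bf b}(x^* )=1\},$$ where $x^*=(x_1^*,\dots,x_n^* )$ is viewed as a column vector.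
   Context: An EACP over a field $K$ (characteristic $\neq 2$) is a $K$-algebra $\mathcal C$ with a basis $\{h_1,\dots,h_n,r\}$ (called a natural basis) whose multiplication is determined by bilinearity from $$h_ir=rh_i=\tfrac12\Big(\sum_{j=1}^n a_{ij}h_j+b_ir\Big),\qquad h_ih_j=0\ (i,j=1,\dots,n),\qquad rr=0,$$ for some constants $a_{ij},b_i\in K$. *)

From mathcomp Require Import all_boot all_order all_algebra.
From mathcomp Require Import reals.
Set Implicit Arguments. Unset Strict Implicit. Unset Printing Implicit Defensive.
Import GRing.Theory Num.Theory.
Local Open Scope ring_scope.

(* An element sum_i x_i h_i + u r of the EACP is identified with the pair
   (x, u) where x : 'cV[R]_n holds the coordinates x_1..x_n. *)
Notation eacp_elt R n := ('cV[R]_n * R^o)%type.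

Definition basis_h (R : realType) (n : nat) (i : 'I_n) : eacp_elt R n :=
  (delta_mx i 0, 0).
Definition basis_r (R : realType) (n : nat) : eacp_elt R n := (0, 1).

(* h_i r = r h_i = 1/2 (sum_j a_ij h_j + b_i r). *)
Definition hr (R : realType) (n : nat) (a : 'M[R]_n) (b : 'I_n -> R)
    (i : 'I_n) : eacp_elt R n :=
  (2^-1 : R) *: (\sum_j a i j *: basis_h R j + b i *: basis_r R n).

(* Multiplication of the EACP with structure constants a, b, obtained by
   bilinear extension of the multiplication table of the natural basis:
   h_i h_j = 0, r r = 0, h_i r = r h_i = hr i. *)
Definition eacp_mul (R : realType) (n : nat) (a : 'M[R]_n) (b : 'I_n -> R)
    (y z : eacp_elt R n) : eacp_elt R n :=
  \sum_i \sum_j (y.1 i 0 * z.1 j 0) *: (0 : eacp_elt R n)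
  + \sum_i (y.1 i 0 * z.2) *: hr a b i
  + \sum_i (y.2 * z.1 i 0) *: hr a b i
  + (y.2 * z.2) *: (0 : eacp_elt R n).

Definition Tmat (R : realType) (n : nat) (a : 'M[R]_n) (u : R) : 'M[R]_n :=
  \matrix_(i, j) (if i == j then u * a j i - 1 else u * a j i).

Definition bfun (R : realType) (n : nat) (b : 'I_n -> R) (x : 'cV[R]_n) : R :=
  \sum_i b i * x i 0.

(* Bilinearity gives (x, u)^2 = (u a^T x, u b(x)), so (x, u) is idempotent
   iff u a^T x = x and u b(x) = u.  For u = 0 this forces x = 0.  Otherwise
   b(x) = 1, so x <> 0 and T_u x = u a^T x - x = 0: the matrix T_u is
   singular. *)

From mathcomp Require Import all_boot all_order all_algebra.
From mathcomp Require Import reals.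
Import GRing.Theory Num.Theory.
Set Implicit Arguments.
Unset Strict Implicit.

Local Open Scope ring_scope.

Lemma fst_sum (V W : nmodType) (I : Type) (r : seq I) (P : pred I) (F : I -> V * W) :
  (\sum_(i <- r | P i) F i).1 = \sum_(i <- r | P i) (F i).1.
Proof. exact: (big_morph fst (fun _ _ => erefl) (erefl _)). Qed.

Lemma snd_sum (V W : nmodType) (I : Type) (r : seq I) (P : pred I) (F : I -> V * W) :
  (\sum_(i <- r | P i) F i).2 = \sum_(i <- r | P i) (F i).2.
Proof. exact: (big_morph snd (fun _ _ => erefl) (erefl _)). Qed.

Lemma det_eq0_of_kernel (R : idomainType) (n : nat) (A : 'M[R]_n) (x : 'cV[R]_n) :
  x != 0 -> A *m x = 0 -> \det A = 0.
Proof.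
move=> x_neq0 Ax0; apply/eqP; rewrite -det_tr; apply/det0P.
by exists x^T; rewrite ?trmx_eq0 // -trmx_mul Ax0 trmx0.
Qed.

Section Eacp.
Variables (R : realType) (n : nat) (a : 'M[R]_n) (b : 'I_n -> R).

Lemma bfunZ (c : R) (x : 'cV[R]_n) : bfun b (c *: x) = c * bfun b x.
Proof. by rewrite /bfun mulr_sumr; apply: eq_bigr => i _; rewrite mxE mulrCA. Qed.

Lemma bfun0 : bfun b 0 = 0.
Proof. by rewrite -(scale0r 0) bfunZ mul0r. Qed.

Lemma hrE i : hr a b i = 2^-1 *: ((col i a^T, b i) : eacp_elt R n).
Proof.
rewrite /hr; congr (_ *: _).
rewrite [LHS]surjective_pairing; congr pair.
- rewrite [LHS]/= fst_sum scaler0 addr0; apply/matrixP => k l.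
  rewrite summxE (bigD1 k) //= big1 => [|j /negPf nkj].
    by rewrite !mxE !eqxx (ord1 l) mulr1 addr0.
  by rewrite !mxE eq_sym nkj mulr0.
- rewrite [LHS]/= snd_sum big1 => [|j _]; last exact: mulr0.
  by rewrite add0r; apply: mulr1.
Qed.

Lemma sum_hr (c : 'cV[R]_n) :
  \sum_i c i 0 *: hr a b i = 2^-1 *: ((a^T *m c, bfun b c) : eacp_elt R n).
Proof.
under eq_bigr do rewrite hrE scalerA mulrC -scalerA.
rewrite -scaler_sumr; congr (_ *: _); rewrite [LHS]surjective_pairing; congr pair.
- rewrite fst_sum; apply/matrixP => k l; rewrite !mxE summxE.
  by apply: eq_bigr => i _; rewrite !mxE (ord1 l) mulrC.
- by rewrite snd_sum; apply: eq_bigr => i _; apply: mulrC.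
Qed.

Lemma eacp_mulE (x z : 'cV[R]_n) (u v : R) :
  eacp_mul a b (x, u) (z, v) =
  2^-1 *: ((a^T *m (v *: x + u *: z), bfun b (v *: x + u *: z)) : eacp_elt R n).
Proof.
rewrite -sum_hr /eacp_mul scaler0 addr0.
rewrite big1 ?add0r => [|i _]; last by rewrite big1 // => j _; rewrite scaler0.
rewrite -big_split; apply: eq_bigr => i _.
by rewrite /= -scalerDl !mxE mulrC [u * _]mulrC.
Qed.

Lemma eacp_sqrE (x : 'cV[R]_n) (u : R) :
  eacp_mul a b (x, u) (x, u) = (u *: (a^T *m x), u * bfun b x).
Proof.
have halfK (y : R) : 2^-1 * (y + y) = y.
  by rewrite -mulr2n -[y *+ 2]mulr_natl mulKf ?pnatr_eq0.
rewrite eacp_mulE -scalerDl bfunZ -scalemxAr.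
rewrite [LHS]surjective_pairing; congr pair; rewrite [LHS]/=.
- by rewrite scalerA halfK.
- by apply: etrans (mulrA _ _ _) _; rewrite halfK.
Qed.

Lemma TmatE (u : R) : Tmat a u = u *: a^T - 1%:M.
Proof.
by apply/matrixP => i j; rewrite !mxE; case: eqP; rewrite ?mulr1n ?mulr0n ?subr0.
Qed.

Lemma eacp_idempotentP (x : 'cV[R]_n) (u : R) :
  eacp_mul a b (x, u) (x, u) = (x, u) <->
  (x, u) = 0 \/ [/\ u != 0, Tmat a u *m x = 0 & bfun b x = 1].
Proof.
rewrite eacp_sqrE TmatE mulmxBl mul1mx -scalemxAl; split.
- case=> ax_x bx_1; have [u0 | u_neq0] := eqVneq u 0.
    by left; rewrite -ax_x u0 scale0r.
  right; split=> //; first by rewrite ax_x subrr.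
  by apply: (mulfI u_neq0); rewrite bx_1 mulr1.
- case=> [[-> ->] | [_ /eqP]]; first by rewrite scale0r mul0r.
  by rewrite subr_eq0 => /eqP -> ->; rewrite mulr1.
Qed.

End Eacp.

Theorem mainTheorem9 (R : realType) (n : nat) (hn : (1 <= n)%N)
    (a : 'M[R]_n) (b : 'I_n -> R) :
  [pred y : eacp_elt R n | eacp_mul a b y y == y] =i
  [pred y : eacp_elt R n |
     (y == 0) ||
     [&& y.2 != 0, \det (Tmat a y.2) == 0,
         Tmat a y.2 *m y.1 == 0 & bfun b y.1 == 1]].
Proof.
move=> [x u]; rewrite !inE; apply/eqP/orP.
- case/eacp_idempotentP => [/eqP y0 | [u_neq0 Tx0 bx1]]; [by left | right].
  rewrite /= u_neq0 Tx0 bx1 (det_eq0_of_kernel _ Tx0) ?eqxx //.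
  by apply: contra_eq_neq bx1 => ->; rewrite bfun0 eq_sym oner_neq0.
- case=> [/eqP y0 | /and4P[u_neq0 _ /eqP Tx0 /eqP bx1]];
    apply/eacp_idempotentP; [by left | by right].
Qed.
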